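(* Let $G'=(V',E')$ be a subgraph of a graph $G=(V,E)$, let $\alpha$ and $\beta$ be two $k$-colorings of $G$, and let $\alpha'=\alpha|_{V'}$ and $\beta'=\beta|_{V'}$. Let $T'\subseteq V'$ and $T\subseteq V$. If the $\alpha'$-node and the $\beta'$-node of $\mathcal{C}^c_k(G',T')$ lie in different components, then the $\alpha$-node and the $\beta$-node of $\mathcal{C}^c_k(G,T)$ lie in different components.
   Context: A $k$-coloring of $G$ is a map $\alpha:V(G)\to\{1,\dots,k\}$ with $\alpha(u)\ne\alpha(v)$ for every edge $uv$. $\mathcal{C}_k(G)$ has the $k$-colorings as nodes, adjacent iff they differ on exactly one vertex. For $T\subseteq V(G)$, label each coloring $\gamma$ by $\gamma|_T$. A label component is a maximal set of colorings with the same label inducing a connected subgraph of $\mathcal{C}_k(G)$. The contracted solution graph $\mathcal{C}^c_k(G,T)=(H,\ell)$ has one node $x$ per label component $S_x$, distinct $x,y$ adjacent iff some $\gamma\in S_x,\gamma'\in S_y$ are adjacent in $\mathcal{C}_k(G)$, and $\ell(x)$ the common label on $S_x$. A certificate is an assignment of nonempty sets $S_x$ of $k$-colorings of $G$ to the nodes $x$ of $H$ such that: the $S_x$ partition the $k$-colorings; $\gamma|_T=\ell(x)$ for $\gamma\in S_x$; adjacent nodes have distinct labels; each $S_x$ induces a connected subgraph of $\mathcal{C}_k(G)$; distinct $x,y$ are adjacent iff some $\gamma\in S_x$ and $\gamma'\in S_y$ are adjacent in $\mathcal{C}_k(G)$. For a fixed certificate, the $\gamma$-node is the node $x$ with $\gamma\in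 S_x$; when several $\gamma$-nodes in one graph are considered they are taken with respect to the same certificate. *)

From mathcomp Require Import all_boot.
Set Implicit Arguments. Unset Strict Implicit. Unset Printing Implicit Defensive.

Section Recol.
Variables (V : finType) (e : rel V) (k : nat).

Definition simple_graph : Prop := symmetric e /\ irreflexive e.

Definition is_coloring (c : {ffun V -> 'I_k}) : bool :=
  [forall u, forall v, e u v ==> (c u != c v)].

Definition recol_adj (c d : {ffun V -> 'I_k}) : bool :=
  [&& is_coloring c, is_coloring d & #|[set v | c v != d v]| == 1].

Variable T : {set V}.

Definition same_label (c d : {ffun V -> 'I_k}) : bool :=
  [forall v in T, c v == d v].

Definition induces_connected (S : {set {ffun V -> 'I_k}}) : bool :=
  [forall c in S, forall d in S,
     connect [rel a b | [&& recol_adj a b, a \in S & b \in S]] c d].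

Definition same_label_conn_set (S : {set {ffun V -> 'I_k}}) : bool :=
  [&& S != set0, [forall c in S, is_coloring c],
      [forall c in S, forall d in S, same_label c d] & induces_connected S].

Definition label_component (S : {set {ffun V -> 'I_k}}) : bool :=
  same_label_conn_set S &&
  [forall S' : {set {ffun V -> 'I_k}},
     ((S \subset S') && same_label_conn_set S') ==> (S' == S)].

(* adjacency of nodes (label components) of the contracted solution graph *)
Definition contracted_adj (S S' : {set {ffun V -> 'I_k}}) : bool :=
  [&& label_component S, label_component S', S != S' &
      [exists c in S, exists d in S', recol_adj c d]].

Definition contracted_same_component (S S' : {set {ffun V -> 'I_k}}) : bool :=
  connect contracted_adj S S'.

End Recol.

Definition restrict (V : finType) (V' : {set V}) (k : nat)
  (c : {ffun V -> 'I_k}) : {ffun {x : V | x \in V'} -> 'I_k} :=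
  [ffun x => c (val x)].

(* Two nodes of the contracted solution graph lie in the same component
   exactly when some (equivalently, every) pair of colorings they contain is
   joined by a recoloring path in C_k(G): the label components through which a
   recoloring path passes form a walk of nodes, and conversely a walk of nodes
   is threaded by recoloring paths inside each (connected) label component.
   Since every edge of G' is an edge of G, restricting to V' keeps colorings
   proper and turns a single recoloring step into at most one recoloring step
   of G'.  Hence a path from alpha to beta in C_k(G) restricts to a path from
   alpha' to beta' in C_k(G'), which contradicts the hypothesis. *)

From mathcomp Require Import all_boot.
Set Implicit Arguments. Unset Strict Implicit. Unset Printing Implicit Defensive.

Lemma connect_homo (A B : finType) (r : rel A) (s : rel B) (f : A -> B) :
  (forall a b, r a b -> connect s (f a) (f b)) ->
  forall a b, connect r a b -> connect s (f a) (f b).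
Proof.
move=> fr a b /connectP[p]; elim: p a => [|c p IHp] a /=; first by move=> _ ->.
by case/andP=> /fr rac cp bE; apply: connect_trans rac (IHp c cp bE).
Qed.

Lemma pairwise_setU (A : finType) (P : rel A) (S1 S2 : {set A}) (c : A) :
  transitive P -> c \in S1 -> c \in S2 ->
  {in S1 &, forall x y, P x y} -> {in S2 &, forall x y, P x y} ->
  {in S1 :|: S2 &, forall x y, P x y}.
Proof.
move=> Ptr cS1 cS2 P1 P2 x y /setUP[] xS /setUP[] yS; first exact: P1.
- exact: Ptr (P1 _ _ xS cS1) (P2 _ _ cS2 yS).
- exact: Ptr (P2 _ _ xS cS2) (P1 _ _ cS1 yS).
exact: P2.
Qed.

Section LabelComponents.
Variables (V : finType) (e : rel V) (k : nat) (T : {set V}).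
Local Notation coloring := {ffun V -> 'I_k}.
Local Notation recol_in S :=
  [rel a b | [&& recol_adj e a b, a \in S & b \in S]].

Lemma same_label_trans : transitive (same_label T : rel coloring).
Proof.
move=> b a c /forall_inP ab /forall_inP bc; apply/forall_inP=> v vT.
by rewrite (eqP (ab v vT)) bc.
Qed.

Lemma connect_recol_in_subset (S S' : {set coloring}) (a b : coloring) :
  S \subset S' -> connect (recol_in S) a b -> connect (recol_in S') a b.
Proof.
move=> sSS'; apply: connect_sub => x y /and3P[xy xS yS].
by apply: connect1; rewrite /= xy !(subsetP sSS').
Qed.

Lemma connect_recol_in (S : {set coloring}) (a b : coloring) :
  connect (recol_in S) a b -> connect (@recol_adj V e k) a b.
Proof. by apply: connect_sub => x y /and3P[xy _ _]; apply: connect1. Qed.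

Lemma same_label_conn_set1 (c : coloring) :
  is_coloring e c -> same_label_conn_set e T [set c].
Proof.
move=> colc; apply/and4P; split.
- by apply/set0Pn; exists c; rewrite set11.
- by apply/forall_inP=> x /set1P ->.
- by apply/forall_inP=> x /set1P ->; apply/forall_inP=> y /set1P ->; apply/forall_inP.
by apply/forall_inP=> x /set1P ->; apply/forall_inP=> y /set1P ->.
Qed.

Lemma same_label_conn_setU (S1 S2 : {set coloring}) (c : coloring) :
  c \in S1 -> c \in S2 -> same_label_conn_set e T S1 ->
  same_label_conn_set e T S2 -> same_label_conn_set e T (S1 :|: S2).
Proof.
move=> cS1 cS2 /and4P[_ col1 lab1 con1] /and4P[_ col2 lab2 con2].
apply/and4P; split.
- by apply/set0Pn; exists c; rewrite inE cS1.
- by apply/forall_inP=> x /setUP[] xS; [apply: (forall_inP col1) | apply: (forall_inP col2)].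
- have lab (S : {set coloring}) : [forall x in S, forall y in S, same_label T x y] ->
      {in S &, forall x y, same_label T x y}.
    by move=> labS x y xS yS; apply: (forall_inP (forall_inP labS x xS)).
  have labU := pairwise_setU same_label_trans cS1 cS2 (lab _ lab1) (lab _ lab2).
  by apply/forall_inP=> x xS; apply/forall_inP=> y yS; apply: labU.
have con (S : {set coloring}) : S \subset S1 :|: S2 -> induces_connected e S ->
    {in S &, forall x y, connect (recol_in (S1 :|: S2)) x y}.
  move=> sS conS x y xS yS; apply: connect_recol_in_subset sS _.
  exact: (forall_inP (forall_inP conS x xS)).
have conU := pairwise_setU (@connect_trans _ _) cS1 cS2
  (con _ (subsetUl _ _) con1) (con _ (subsetUr _ _) con2).
by apply/forall_inP=> x xS; apply/forall_inP=> y yS; apply: conU.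
Qed.

Lemma label_component_maxset (S : {set coloring}) :
  label_component e T S = maxset (same_label_conn_set e T) S.
Proof.
apply/andP/maxsetP=> [[hS /forallP maxS] | [hS maxS]]; split=> //.
  by move=> S' hS' sSS'; apply/eqP/(implyP (maxS S')); rewrite sSS'.
by apply/forallP=> S'; apply/implyP=> /andP[sSS' hS']; rewrite (maxS S').
Qed.

Lemma label_component_exists (c : coloring) :
  is_coloring e c -> exists2 S, label_component e T S & c \in S.
Proof.
move=> /same_label_conn_set1/maxset_exists[S maxS].
by rewrite sub1set; exists S; rewrite // label_component_maxset.
Qed.

Lemma label_component_unique (S1 S2 : {set coloring}) (c : coloring) :
  label_component e T S1 -> label_component e T S2 -> c \in S1 -> c \in S2 ->
  S1 = S2.
Proof.
rewrite !label_component_maxset => max1 max2 cS1 cS2.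
have hU := same_label_conn_setU cS1 cS2 (maxsetp max1) (maxsetp max2).
by rewrite -(maxsetsup max1 hU (subsetUl _ _)) (maxsetsup max2 hU (subsetUr _ _)).
Qed.

Lemma label_component_connect (S : {set coloring}) (c d : coloring) :
  label_component e T S -> c \in S -> d \in S -> connect (@recol_adj V e k) c d.
Proof.
case/andP=> /and4P[_ _ _ conS] _ cS dS.
exact: connect_recol_in (forall_inP (forall_inP conS c cS) d dS).
Qed.

Lemma connect_recol_contracted (c d : coloring) (S S' : {set coloring}) :
  label_component e T S -> c \in S -> label_component e T S' -> d \in S' ->
  connect (@recol_adj V e k) c d -> contracted_same_component e T S S'.
Proof.
move=> hS cS hS' dS' /connectP[p]; elim: p c S hS cS => [|c1 p IHp] c S hS cS /=.
  by move=> _ dE; subst d; rewrite (label_component_unique hS hS' cS dS'); apply: connect0.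
case/andP=> cc1 c1p dE; have /label_component_exists[S1 hS1 c1S1] : is_coloring e c1.
  by case/and3P: cc1.
apply: connect_trans (IHp _ _ hS1 c1S1 c1p dE).
have [<- | SS1] := eqVneq S S1; first exact: connect0.
apply: connect1; rewrite /contracted_adj hS hS1 SS1 /=.
by apply/exists_inP; exists c => //; apply/exists_inP; exists c1.
Qed.

Lemma contracted_connect_recol (S S' : {set coloring}) (c d : coloring) :
  label_component e T S' -> c \in S -> d \in S' ->
  contracted_same_component e T S S' -> connect (@recol_adj V e k) c d.
Proof.
move=> hS' cS dS' /connectP[p]; elim: p S c cS => [|S1 p IHp] S c cS /=.
  by move=> _ SE; apply: label_component_connect hS' _ dS'; rewrite SE.
case/andP=> /and4P[hS _ _ /exists_inP[a aS /exists_inP[b bS1 ab]]] S1p S'E.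
apply: connect_trans (label_component_connect hS cS aS) _.
exact: connect_trans (connect1 ab) (IHp _ _ bS1 S1p S'E).
Qed.

Lemma contracted_same_componentP (S S' : {set coloring}) (c d : coloring) :
  label_component e T S -> c \in S -> label_component e T S' -> d \in S' ->
  contracted_same_component e T S S' = connect (@recol_adj V e k) c d.
Proof.
move=> hS cS hS' dS'; apply/idP/idP.
  exact: contracted_connect_recol.
exact: connect_recol_contracted.
Qed.

End LabelComponents.

Section Restriction.
Variables (V : finType) (e : rel V) (V' : {set V}) (e' : rel {x : V | x \in V'}).
Variable k : nat.
Hypothesis sub_e'e : forall x y : {x : V | x \in V'}, e' x y -> e (val x) (val y).

Lemma restrict_coloring (c : {ffun V -> 'I_k}) :
  is_coloring e c -> is_coloring e' (restrict V' c).
Proof.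
move=> /forallP colc; apply/forallP=> u; apply/forallP=> v; apply/implyP=> uv.
by rewrite !ffunE (implyP (forallP (colc (val u)) (val v)) (sub_e'e uv)).
Qed.

Lemma connect_restrict_recol_adj (c d : {ffun V -> 'I_k}) :
  recol_adj e c d -> connect (@recol_adj _ e' k) (restrict V' c) (restrict V' d).
Proof.
case/and3P=> colc cold /eqP diff1.
set D' := [set v | restrict V' c v != restrict V' d v].
have : #|D'| <= 1.
  rewrite -diff1 -(card_imset _ val_inj); apply: subset_leq_card.
  by apply/subsetP=> x /imsetP[v]; rewrite !inE !ffunE => cdv ->.
rewrite leq_eqVlt ltnS leqn0 => /orP[D'1 | /eqP/cards0_eq D'0].
  by apply: connect1; rewrite /recol_adj !restrict_coloring.
apply: eq_connect0; apply/ffunP=> v; apply/eqP/negPn/negP=> cdv.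
by have := in_set0 v; rewrite -D'0 inE cdv.
Qed.

Lemma connect_restrict (c d : {ffun V -> 'I_k}) :
  connect (@recol_adj V e k) c d ->
  connect (@recol_adj _ e' k) (restrict V' c) (restrict V' d).
Proof. exact: connect_homo connect_restrict_recol_adj c d. Qed.

End Restriction.

Theorem proposition9
  (V : finType) (e : rel V) (V' : {set V}) (e' : rel {x : V | x \in V'})
  (k : nat) (alpha beta : {ffun V -> 'I_k})
  (T' : {set {x : V | x \in V'}}) (T : {set V}) :
  simple_graph e -> simple_graph e' ->
  (forall x y : {x : V | x \in V'}, e' x y -> e (val x) (val y)) ->
  is_coloring e alpha -> is_coloring e beta ->
  forall (Na' Nb' : {set {ffun {x : V | x \in V'} -> 'I_k}})
         (Na Nb : {set {ffun V -> 'I_k}}),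
  label_component e' T' Na' -> restrict V' alpha \in Na' ->
  label_component e' T' Nb' -> restrict V' beta \in Nb' ->
  label_component e T Na -> alpha \in Na ->
  label_component e T Nb -> beta \in Nb ->
  ~~ contracted_same_component e' T' Na' Nb' ->
  ~~ contracted_same_component e T Na Nb.
Proof.
move=> _ _ sub_e'e _ _ Na' Nb' Na Nb hNa' aNa' hNb' bNb' hNa aNa hNb bNb.
rewrite (contracted_same_componentP hNa' aNa' hNb' bNb').
rewrite (contracted_same_componentP hNa aNa hNb bNb).
by apply: contra; apply: connect_restrict.
Qed.
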